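(* Let $d\ge2$ and let $A$ be a subset of $\Delta\cap B_{\rm o}$. Then (1) $A$ is a germ if and only if $A\subseteq A^*$; (2) $A$ is a maximal germ if and only if $A=A^*$. In particular, a subset of $\Delta$ is a maximal germ if and only if it is a qplex.
   Context: Fix an integer $d\ge 2$. $\langle\cdot,\cdot\rangle$ is the standard inner product on $\mathbb{R}^{d^2}$, $\|\cdot\|$ the Euclidean norm. $\Delta=\{p\in\mathbb{R}^{d^2}: p(i)\ge0,\ \sum_ip(i)=1\}$; $H=\{u\in\mathbb{R}^{d^2}:\sum_i u(i)=1\}$; $c=(1/d^2,\dots,1/d^2)$. For $A\subseteq H$ the polar is $A^*=\{u\in H:\langle u,v\rangle\ge\frac{1}{d(d+1)}\ \forall v\in A\}$. The out-ball is $B_{\rm o}=\{u\in H:\|u-c\|\le r_{\rm o}\}$ with $r_{\rm o}^2=\frac{d-1}{d^2(d+1)}$ (equivalently $\langle u,u\rangle\le\frac{2}{d(d+1)}$). A subset $A\subseteq\Delta$ is a germ if $\frac{1}{d(d+1)}\le\langle p,s\rangle\le\frac{2}{d(d+1)}$ for all $p,s\in A$ (including $p=s$); a germ is maximal if no point of $\Delta$ can be added to it while keeping it a germ. A qplex is a set $Q\subseteq\Delta\cap B_{\rm o}$ with $Q^*=Q$. *)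

From HB Require Import structures.
From mathcomp Require Import all_boot all_order all_algebra.
Set Implicit Arguments. Unset Strict Implicit. Unset Printing Implicit Defensive.
Import Order.TTheory GRing.Theory Num.Theory.
Local Open Scope ring_scope.

Section Qplex.
Variables (R : realFieldType) (d : nat).

Definition vec := 'rV[R]_(d ^ 2).

Definition vset := vec -> Prop.

Definition dot (u v : vec) : R := \sum_(i < d ^ 2) u 0 i * v 0 i.

Definition lowc : R := ((d * (d + 1))%N%:R)^-1.
Definition upc : R := 2 / ((d * (d + 1))%N%:R).

Definition inH (u : vec) : Prop := \sum_(i < d ^ 2) u 0 i = 1.

Definition inDelta (p : vec) : Prop := (forall i, 0 <= p 0 i) /\ inH p.

(* out-ball B_o, in the equivalent form <u,u> <= 2/(d(d+1)) within H *)
Definition inBo (u : vec) : Prop := inH u /\ dot u u <= upc.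

Definition polar (A : vset) : vset :=
  fun u => inH u /\ forall v, A v -> lowc <= dot u v.

Definition vsubset (A B : vset) : Prop := forall u, A u -> B u.
Definition seteq (A B : vset) : Prop := forall u, A u <-> B u.

Definition germ (A : vset) : Prop :=
  vsubset A inDelta /\
  forall p s, A p -> A s -> lowc <= dot p s /\ dot p s <= upc.

Definition add_pt (A : vset) (p : vec) : vset := fun u => A u \/ u = p.

Definition maximal_germ (A : vset) : Prop :=
  germ A /\ forall p, inDelta p -> ~ A p -> ~ germ (add_pt A p).

Definition qplex (Q : vset) : Prop :=
  vsubset Q (fun u => inDelta u /\ inBo u) /\ seteq (polar Q) Q.

End Qplex.

From HB Require Import structures.
From mathcomp Require Import all_boot all_order all_algebra ring lra.
From Stdlib Require Import Classical.
Set Implicit Arguments. Unset Strict Implicit. Unset Printing Implicit Defensive.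
Import Order.TTheory GRing.Theory Num.Theory.
Local Open Scope ring_scope.

(* On the hyperplane H, <u,u> - 1/d^2 is the squared distance from u to the
   centre c, and the upper germ bound <p,s> <= 2/(d(d+1)) follows from the same
   bound on <p,p> and <s,s> since 2<p,s> <= <p,p> + <s,s>; this gives (1) and
   the easy half of (2).  For the converse, let A be a maximal germ and u in A^*.
   A point of Delta n B_o that meets all of A at least 1/(d(d+1)) can be added to
   A, hence already lies in A.  Testing u against two such points shows u in
   Delta n B_o: the point with coordinates 1/(d(d+1)) + [j = i]/(d+1), which
   meets all of Delta, gives u_i >= 0; a point w obtained by reflecting u
   through c and rescaling so that w lies in the inscribed ball of Delta gives
   |u - c| <= r_o.
   Then u itself can be added to A, so A^* = A. *)

Section Euclid.
Variables (R : realFieldType) (d : nat).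
Local Notation vec := (vec R d).
Local Notation nR := ((d ^ 2)%:R : R).

Lemma dotC (x y : vec) : dot x y = dot y x.
Proof. by apply: eq_bigr => i _; rewrite mulrC. Qed.

Lemma dot_amgm (x y : vec) : 2 * dot x y <= dot x x + dot y y.
Proof.
rewrite -subr_ge0; have -> : dot x x + dot y y - 2 * dot x y =
    \sum_(i < d ^ 2) (x 0 i - y 0 i) ^+ 2.
  by rewrite /dot mulr_sumr -big_split -sumrB /=; apply: eq_bigr => i _; ring.
by apply: sumr_ge0 => i _; rewrite sqr_ge0.
Qed.

Lemma dot_le_of_self_le (x y : vec) c :
  dot x x <= c -> dot y y <= c -> dot x y <= c.
Proof. by move=> xc yc; have := dot_amgm x y; lra. Qed.

Lemma inH_delta i : inH (delta_mx 0 i : vec).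
Proof.
rewrite /inH (bigD1 i) //= big1 ?addr0 => [|j ji]; rewrite mxE ?eqxx //.
by rewrite (negbTE ji).
Qed.

Lemma dot_delta i (s : vec) : dot (delta_mx 0 i) s = s 0 i.
Proof.
rewrite /dot (bigD1 i) //= big1 ?addr0 => [|j ji]; rewrite mxE ?eqxx ?mul1r //.
by rewrite (negbTE ji) mul0r.
Qed.

Lemma inH_affine a b (x : vec) :
  a * nR + b = 1 -> inH x -> inH (const_mx a + b *: x).
Proof.
move=> ab hx; rewrite /inH -{}ab; under eq_bigr do rewrite !mxE.
by rewrite big_split /= sumr_const card_ord -mulr_sumr hx mulr1 mulr_natr.
Qed.

Lemma dot_affine a b (x s : vec) :
  inH s -> dot (const_mx a + b *: x) s = a + b * dot x s.
Proof.
move=> hs; transitivity (a * \sum_(i < d ^ 2) s 0 i + b * dot x s).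
  rewrite /dot !mulr_sumr -big_split /=.
  by apply: eq_bigr => i _; rewrite !mxE mulrDl mulrA.
by rewrite hs mulr1.
Qed.

Lemma inH_sum_sqr_sub (x : vec) t : inH x ->
  \sum_(i < d ^ 2) (x 0 i - t) ^+ 2 = dot x x - 2 * t + nR * t ^+ 2.
Proof.
move=> hx; transitivity
    (dot x x - 2 * t * \sum_(i < d ^ 2) x 0 i + \sum_(i < d ^ 2) t ^+ 2).
  rewrite /dot mulr_sumr -sumrB -big_split /=; apply: eq_bigr => i _; ring.
by rewrite hx sumr_const card_ord; ring.
Qed.

Lemma inH_dot_self_ge (x : vec) : (0 < d)%N -> inH x -> nR^-1 <= dot x x.
Proof.
move=> d_gt0 hx; have n_gt0 : 0 < nR by rewrite ltr0n expn_gt0 d_gt0.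
have := inH_sum_sqr_sub nR^-1 hx; set t := nR^-1 => sum_sqr.
have nt : nR * t = 1 by rewrite divff ?gt_eqF.
have : 0 <= \sum_(i < d ^ 2) (x 0 i - t) ^+ 2 by apply: sumr_ge0 => i _; apply: sqr_ge0.
rewrite sum_sqr; nra.
Qed.

Lemma inH_ge0_of_dot_le (x : vec) j : (1 < d)%N -> inH x ->
  dot x x <= (nR - 1)^-1 -> 0 <= x 0 j.
Proof.
move=> d_gt1 hx; have n_gt1 : 1 < nR by rewrite ltr1n -(exp1n 2) ltn_exp2r.
set t := (nR - 1)^-1 => x_small.
have nt : (nR - 1) * t = 1 by rewrite divff // subr_eq0 gt_eqF.
have t_gt0 : 0 < t by rewrite invr_gt0 subr_gt0.
have : (x 0 j - t) ^+ 2 <= dot x x - 2 * t + nR * t ^+ 2.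
  rewrite -inH_sum_sqr_sub // (bigD1 j) //= lerDl.
  by apply: sumr_ge0 => i _; apply: sqr_ge0.
move=> bound; rewrite leNgt; apply/negP => x_neg; nra.
Qed.

End Euclid.

Lemma amgm_scale_le (R : realFieldType) (K r N M : R) :
  0 < r -> 0 <= N -> K ^+ 2 = r * M -> (2 * K / (N + r)) ^+ 2 * N <= M.
Proof.
move=> r_gt0 N_ge0 KrM; set l := 2 * K / (N + r).
have lNr : l * (N + r) = 2 * K by rewrite mulfVK // gt_eqF // ltr_wpDl.
suff : r * (l ^+ 2 * N) <= r * M by rewrite ler_pM2l.
have := sqr_ge0 (l * (N - r)).
have -> : (l * (N - r)) ^+ 2 = (l * (N + r)) ^+ 2 - 4 * (r * (l ^+ 2 * N)) by ring.
rewrite lNr; nra.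
Qed.

Section Qplex.
Variables (R : realFieldType) (d : nat).
Hypothesis d_ge2 : (2 <= d)%N.

Local Notation vec := (vec R d).
Local Notation nR := ((d ^ 2)%:R : R).
Local Notation D := (d%:R : R).
Local Notation lo := (lowc R d).
Local Notation up := (upc R d).

Let D_ge2 : 2 <= D. Proof. by rewrite (ler_nat R 2 d). Qed.
Let D_neq0 : D != 0. Proof. by apply/eqP => D0; move: D_ge2; rewrite D0; lra. Qed.
Let D1_neq0 : D + 1 != 0. Proof. by apply/eqP => D0; have := D_ge2; lra. Qed.

Let nRE : nR = D ^+ 2. Proof. by rewrite natrX. Qed.
Let lowcE : lo = (D * (D + 1))^-1. Proof. by rewrite /lowc natrM natrD. Qed.
Let upcE : up = 2 / (D * (D + 1)). Proof. by rewrite /upc natrM natrD. Qed.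

(* With n = d^2: r_o^2 = upc - 1/n, the ball of H inscribed in Delta has
   r_in^2 = 1/(n-1) - 1/n, and lowc_gap_sqr says 1/n - lowc = r_o * r_in. *)
Lemma lowc_gt0 : 0 < lo.
Proof. by rewrite lowcE invr_gt0; have := D_ge2; nra. Qed.

Lemma lowc_lt_invn : lo < nR^-1.
Proof. by rewrite lowcE nRE ltf_pV2 ?posrE; have := D_ge2; nra. Qed.

Lemma invn_lt_upc : nR^-1 < up.
Proof.
rewrite -subr_gt0 upcE nRE.
have -> : 2 / (D * (D + 1)) - (D ^+ 2)^-1 = (D - 1) / (D ^+ 2 * (D + 1)).
  by field; rewrite D1_neq0 D_neq0.
by apply: divr_gt0; have := D_ge2; nra.
Qed.

Lemma invn_pred_le_upc : (nR - 1)^-1 <= up.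
Proof.
rewrite -subr_ge0 upcE nRE.
have D2_neq0 : D ^+ 2 - 1 != 0 by apply/eqP => D0; move: D_ge2; nra.
have -> : 2 / (D * (D + 1)) - (D ^+ 2 - 1)^-1 = (D - 2) / (D * (D ^+ 2 - 1)).
  by field; rewrite D2_neq0 D1_neq0 D_neq0.
by apply: divr_ge0; have := D_ge2; nra.
Qed.

Lemma lowc_gap_sqr :
  (nR^-1 - lo) ^+ 2 = (up - nR^-1) * ((nR - 1)^-1 - nR^-1).
Proof.
have D2_neq0 : D ^+ 2 - 1 != 0 by apply/eqP => D0; move: D_ge2; nra.
by rewrite lowcE upcE nRE; field; rewrite D2_neq0 D1_neq0 D_neq0.
Qed.

Lemma corner_constants :
  lo * nR + (D + 1)^-1 = 1 /\ lo + (D + 1)^-1 * (lo + (D + 1)^-1) = up.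
Proof. by rewrite lowcE upcE nRE; split; field; rewrite D1_neq0 D_neq0. Qed.

Lemma germ_dot_self_le (A : vset R d) s : germ A -> A s -> dot s s <= up.
Proof. by move=> [_ A_germ] sA; case: (A_germ s s sA sA). Qed.

Lemma maximal_germ_mem (A : vset R d) p : maximal_germ A -> inDelta p ->
  dot p p <= up -> (forall s, A s -> lo <= dot p s) -> A p.
Proof.
move=> [A_germ A_max] pD pp_le p_compat; apply: NNPP => pA.
apply: (A_max p pD pA); split=> [u [uA|->] //|]; first exact: A_germ.1.
have pp_ge : lo <= dot p p.
  apply: ltW (lt_le_trans lowc_lt_invn _).
  by apply: inH_dot_self_ge pD.2; apply: ltn_trans d_ge2.
have s_le s : A s -> dot s s <= up by apply: germ_dot_self_le.
move=> a b [aA|->] [bA|->].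
- exact: A_germ.2.
- by rewrite dotC; split; [exact: p_compat | exact: dot_le_of_self_le pp_le (s_le a aA)].
- by split; [exact: p_compat | exact: dot_le_of_self_le pp_le (s_le b bA)].
- by [].
Qed.

Lemma germ_iff_sub_polar (A : vset R d) :
  vsubset A (fun u => inDelta u /\ inBo u) -> germ A <-> vsubset A (polar A).
Proof.
move=> A_sub; split=> [[_ A_germ] u uA | A_polar].
  by split=> [|v vA]; [exact: (A_sub u uA).1.2 | case: (A_germ u v uA vA)].
split=> [u uA|p s pA sA]; first exact: (A_sub u uA).1.
split; first exact: (A_polar p pA).2 s sA.
by apply: dot_le_of_self_le; [exact: (A_sub p pA).2.2 | exact: (A_sub s sA).2.2].
Qed.

Lemma maximal_germ_of_self_polar (A : vset R d) :
  vsubset A (fun u => inDelta u /\ inBo u) -> seteq A (polar A) -> maximal_germ A.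
Proof.
move=> A_sub A_self; split=> [|p pD pA [_ Ap_germ]].
  by apply/(germ_iff_sub_polar A_sub) => u /A_self.
apply/pA/A_self; split=> [|v vA]; first exact: pD.2.
by case: (Ap_germ p v (or_intror erefl) (or_introl vA)).
Qed.

Lemma maximal_germ_polar_ge0 (A : vset R d) u i :
  maximal_germ A -> polar A u -> 0 <= u 0 i.
Proof.
move=> A_max [uH u_polar]; have [q_total q_norm] := corner_constants.
set b := (D + 1)^-1; have b_gt0 : 0 < b by rewrite invr_gt0; have := D_ge2; lra.
set q : vec := const_mx lo + b *: delta_mx 0 i.
have qH : inH q by apply: inH_affine; [exact: q_total | exact: inH_delta].
have dot_q s : inH s -> dot q s = lo + b * s 0 i.
  by move=> sH; rewrite dot_affine // dot_delta.
have qA : A q.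
  apply: (maximal_germ_mem A_max).
  - split=> // j; rewrite !mxE addr_ge0 ?mulr_ge0 ?ler0n //.
    + exact: ltW lowc_gt0.
    + exact: ltW b_gt0.
  - by rewrite dot_q // !mxE !eqxx mulr1 q_norm.
  - move=> s sA; have [s_ge0 sH] := A_max.1.1 s sA.
    by rewrite dot_q // lerDl mulr_ge0 // ltW.
by have := u_polar q qA; rewrite dotC dot_q // lerDl pmulr_rge0.
Qed.

Lemma maximal_germ_polar_dot_le (A : vset R d) u :
  maximal_germ A -> polar A u -> dot u u <= up.
Proof.
move=> A_max [uH u_polar].
set t := nR^-1; set K := t - lo; set r := up - t; set N := dot u u - t.
have K_gt0 : 0 < K by rewrite subr_gt0 lowc_lt_invn.
have r_gt0 : 0 < r by rewrite subr_gt0 invn_lt_upc.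
have N_ge0 : 0 <= N by rewrite subr_ge0 inH_dot_self_ge // (ltn_trans _ d_ge2).
have nt : t * nR = 1 by rewrite mulVf // nRE sqrf_eq0.
set l := 2 * K / (N + r).
have lNr : l * (N + r) = 2 * K by rewrite mulfVK // gt_eqF // ltr_wpDl.
have l_gt0 : 0 < l by rewrite divr_gt0 ?mulr_gt0 // ltr_wpDl.
(* w = c - l (u - c); l is the largest scale for which the AM-GM bound on <u,s>
   still keeps <w,s> >= lowc on A. *)
set w : vec := const_mx ((1 + l) * t) + (- l) *: u.
have wH : inH w by apply: inH_affine uH; rewrite -mulrA nt; ring.
have dot_w s : inH s -> dot w s = (1 + l) * t - l * dot u s.
  by move=> sH; rewrite dot_affine // mulNr.
have ww : dot w w = t + l ^+ 2 * N by rewrite dot_w // dotC dot_w // /N; ring.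
have ww_le : dot w w <= (nR - 1)^-1.
  by rewrite ww -lerBrDl amgm_scale_le // lowc_gap_sqr.
have wA : A w.
  apply: (maximal_germ_mem A_max) => [|| s sA].
  - by split=> // j; apply: inH_ge0_of_dot_le.
  - exact: le_trans ww_le invn_pred_le_upc.
  - have sH := (A_max.1.1 s sA).2; have ss := germ_dot_self_le A_max.1 sA.
    have : l * (2 * dot u s) <= l * (dot u u + dot s s) by rewrite ler_wpM2l ?dot_amgm ?ltW.
    rewrite dot_w // /K /N /r in lNr *; nra.
have := u_polar w wA; rewrite dotC dot_w // => uw_ge.
have : l * N <= l * r by rewrite /N /K in lNr uw_ge *; nra.
by rewrite ler_pM2l // lerBlDr subrK.
Qed.

Lemma maximal_germ_self_polar (A : vset R d) : maximal_germ A -> seteq A (polar A).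
Proof.
move=> A_max u; split=> [uA | u_polar].
  split=> [|v vA]; first exact: (A_max.1.1 u uA).2.
  by case: (A_max.1.2 u v uA vA).
apply: (maximal_germ_mem A_max); last exact: u_polar.2.
- by split=> [i|]; [exact: maximal_germ_polar_ge0 A_max u_polar | exact: u_polar.1].
- exact: maximal_germ_polar_dot_le A_max u_polar.
Qed.

End Qplex.

Theorem mainTheorem3 (R : realFieldType) (d : nat) (hd : (2 <= d)%N) :
  (forall A : vset R d, vsubset A (fun u => inDelta u /\ inBo u) ->
     (germ A <-> vsubset A (polar A)) /\
     (maximal_germ A <-> seteq A (polar A))) /\
  (forall A : vset R d, vsubset A (@inDelta R d) ->
     (maximal_germ A <-> qplex A)).
Proof.
split=> A A_sub.
  split; first exact: germ_iff_sub_polar.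
  by split; [exact: maximal_germ_self_polar | exact: maximal_germ_of_self_polar].
have self_polar_sym : seteq A (polar A) <-> seteq (polar A) A.
  by split=> A_self u; split=> /A_self.
split=> [A_max | [Q_sub /self_polar_sym Q_self]].
  split; last exact/self_polar_sym/maximal_germ_self_polar.
  move=> u uA; have uD := A_sub u uA.
  by do 2!split=> //; [exact: uD.2 | exact: germ_dot_self_le A_max.1 uA].
exact: maximal_germ_of_self_polar.
Qed.
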